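(* For every $\theta,\bar\theta\in\mathbb R^m$ there exists a stochastic policy $\mu_{\theta,\bar\theta}$ such that \[ T_\alpha(\theta)-T_\alpha(\bar\theta)=A_{\mu_{\theta,\bar\theta}}(\theta-\bar\theta). \] In particular, suppose $\theta^\star$ is a projected Bellman fixed point, $\theta_{k+1}=T_\alpha(\theta_k)$, and $x_k:=\theta_k-\theta^\star$. Then $x_{k+1}=A_{\mu_k}x_k$ for all $k\ge0$, where each $\mu_k$ is a stochastic policy depending measurably on $(\theta_k,\theta^\star)$.
   Context: Consider a finite discounted MDP with state space $\mathcal S=\{1,\dots,|\mathcal S|\}$, action space $\mathcal A=\{1,\dots,|\mathcal A|\}$, transition probabilities $P(s'\mid s,a)$, expected reward $R(s,a)$, and discount factor $\gamma\in(0,1)$. State-action vectors are ordered as $(1,1),(2,1),\dots,(|\mathcal S|,1),(1,2),\dots$. The matrix $P\in\mathbb R^{|\mathcal S||\mathcal A|\times|\mathcal S|}$ has rows $P(\cdot\mid s,a)$, and $R$ has entries $R(s,a)$. A stochastic policy is a map $\mu:\mathcal S\to\Delta_{|\mathcal A|}$, where $\Delta_{|\mathcal A|}$ is the probability simplex. The matrix $\Pi^\mu\in\mathbb R^{|\mathcal S|\times|\mathcal S||\mathcal A|}$ has entry $\mu(a\mid s)$ in row $s$, column $(s,a)$, and zeros elsewhere. The feature matrix $\Phi\in\mathbb R^{|\mathcal S||\mathcal A|\times m}$ has full column rank and rows $\phi(s,a)^\top$. Define $V_\theta(s):=\max_a\phi(s,a)^\top\theta$. The distribution $d$ on $\mathcal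 S\times\mathcal A$ satisfies $d>0$ everywhere, and $D=\mathrm{diag}(d)$. The step size is $\alpha\in(0,1)$. Define $g(\theta):=\Phi^\top D(R+\gamma PV_\theta-\Phi\theta)$ and $T_\alpha(\theta):=\theta+\alpha g(\theta)$. A projected Bellman fixed point is a $\theta^\star$ with $g(\theta^\star)=0$. For a stochastic policy $\mu$, define $A_\mu:=I-\alpha\Phi^\top D\Phi+\alpha\gamma\Phi^\top DP\Pi^\mu\Phi$. *)

From HB Require Import structures.
From mathcomp Require Import all_boot all_order all_algebra.
From mathcomp Require Import all_classical all_reals all_analysis.
Set Implicit Arguments. Unset Strict Implicit. Unset Printing Implicit Defensive.
Import Order.TTheory GRing.Theory Num.Theory.
Import numFieldNormedType.Exports.
Local Open Scope classical_set_scope.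
Local Open Scope ring_scope.

(* State-action pairs are indexed by 'I_(nA * nS) with
   (s,a) |-> a * nS + s  (= mxvec_index a s), i.e. the ordering
   (1,1),(2,1),...,(|S|,1),(1,2),... of the paper. *)
Definition sa_idx (nS nA : nat) (s : 'I_nS) (a : 'I_nA) : 'I_(nA * nS) :=
  mxvec_index a s.

Section MDP.
Variables (R : realType) (nS nA m : nat).

Definition row_stochastic (k l : nat) (M : 'M[R]_(k, l)) : Prop :=
  (forall i j, 0 <= M i j) /\ (forall i, \sum_j M i j = 1).

(* stochastic policy mu : S -> Delta_{|A|}, stored as mu s a = mu(a|s) *)
Definition is_policy (mu : 'M[R]_(nS, nA)) : Prop := row_stochastic mu.

(* Pi^mu : |S| x |S||A|, entry mu(a|s) at row s, column (s,a), 0 elsewhere *)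
Definition Pi_mat (mu : 'M[R]_(nS, nA)) : 'M[R]_(nS, nA * nS) :=
  \matrix_(s, j) \sum_(a < nA) (j == sa_idx s a)%:R * mu s a.

(* maximum of a finite family (the head default is only used when nA = 0) *)
Definition fmax (f : 'I_nA -> R) : R :=
  \big[Num.max/head 0 (map f (enum 'I_nA))]_(a < nA) f a.

Definition Vtheta (Phi : 'M[R]_(nA * nS, m)) (theta : 'cV[R]_m) : 'cV[R]_nS :=
  \col_s fmax (fun a => (Phi *m theta) (sa_idx s a) 0).

Definition Dmat (d : 'cV[R]_(nA * nS)) : 'M[R]_(nA * nS) := diag_mx d^T.

Definition gfun (P : 'M[R]_(nA * nS, nS)) (Rw : 'cV[R]_(nA * nS)) (gamma : R)
  (Phi : 'M[R]_(nA * nS, m)) (d : 'cV[R]_(nA * nS)) (theta : 'cV[R]_m) : 'cV[R]_m :=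
  Phi^T *m Dmat d *m (Rw + gamma *: (P *m Vtheta Phi theta) - Phi *m theta).

Definition Talpha (P : 'M[R]_(nA * nS, nS)) (Rw : 'cV[R]_(nA * nS)) (gamma : R)
  (Phi : 'M[R]_(nA * nS, m)) (d : 'cV[R]_(nA * nS)) (alpha : R)
  (theta : 'cV[R]_m) : 'cV[R]_m :=
  theta + alpha *: gfun P Rw gamma Phi d theta.

Definition Amu (P : 'M[R]_(nA * nS, nS)) (gamma : R)
  (Phi : 'M[R]_(nA * nS, m)) (d : 'cV[R]_(nA * nS)) (alpha : R)
  (mu : 'M[R]_(nS, nA)) : 'M[R]_m :=
  1%:M - alpha *: (Phi^T *m Dmat d *m Phi)
       + (alpha * gamma) *: (Phi^T *m Dmat d *m P *m Pi_mat mu *m Phi).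

End MDP.

Definition borel_meas (R : realType) (T : topologicalType) (f : T -> R) : Prop :=
  forall U : set R, open U -> <<s [set A : set T | open A] >> (f @^-1` U).

From HB Require Import structures.
From mathcomp Require Import all_boot all_order all_algebra.
From mathcomp Require Import all_classical all_reals all_analysis.
From mathcomp Require Import measurable_realfun ring.
Import Order.TTheory GRing.Theory Num.Theory.
Set Implicit Arguments. Unset Strict Implicit. Unset Printing Implicit Defensive.
Import numFieldNormedType.Exports.
Local Open Scope classical_set_scope.
Local Open Scope ring_scope.

(* Let a and b be greedy actions of theta and thetabar at a state s, and write
   Delta(s,c) for the difference of their Q-values at (s,c).  Greediness of b
   for thetabar and of a for theta squeezes
   V_theta(s) - V_thetabar(s) = Q_theta(s,a) - Q_thetabar(s,b)
   between Delta(s,b) and Delta(s,a), so it equals lambda Delta(s,a) +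
   (1 - lambda) Delta(s,b) for some lambda in [0,1].  The policy playing a with
   probability lambda and b otherwise thus gives
   V_theta - V_thetabar = Pi^mu Phi (theta - thetabar), and T_alpha is affine in
   (theta, V_theta).  Breaking ties towards the lowest action index and taking
   lambda to be a ratio of Q-value differences, mu is a finite sum of Borel
   functions of (theta, thetabar) times indicators of Borel sets.  The second
   part applies the first to theta_k and the fixed point theta*, for which
   T_alpha theta* = theta*. *)

Section FirstArgmax.
Variables (R : realDomainType) (n : nat) (a0 : 'I_n).
Implicit Types (f : 'I_n -> R) (a b : 'I_n).

Definition is_first_max f a : bool :=
  [forall c, f c <= f a] && [forall j : 'I_n, (j < a)%N ==> (f j < f a)].

Definition argmax f : 'I_n :=
  let M := [arg max_(i > a0) f i]%O in [arg min_(i < M | f i == f M) i].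

Lemma argmaxP f : is_first_max f (argmax f).
Proof.
rewrite /argmax; case: arg_maxP => // M _ Mmax.
case: arg_minnP => // a /eqP faM amin; apply/andP; split.
  by apply/forallP => c; rewrite faM; exact: Mmax.
apply/forallP => j; apply/implyP => ja; rewrite lt_neqAle faM.
apply/andP; split; last exact: Mmax.
by apply/negP => /(amin j); rewrite leqNgt ja.
Qed.

Lemma is_first_max_uniq f a b : is_first_max f a -> is_first_max f b -> a = b.
Proof.
move=> /andP[/forallP amax /forallP afirst] /andP[/forallP bmax /forallP bfirst].
case: (ltngtP a b) => [ab|ba|/val_inj //].
  by have := implyP (bfirst a) ab; rewrite ltNge amax.
by have := implyP (afirst b) ba; rewrite ltNge bmax.
Qed.

Lemma argmax_eq f a : (argmax f == a) = is_first_max f a.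
Proof.
apply/eqP/idP => [<-|fa]; first exact: argmaxP.
exact: is_first_max_uniq (argmaxP f) fa.
Qed.

Lemma argmax_max f c : f c <= f (argmax f).
Proof. by have /andP[/forallP] := argmaxP f. Qed.

End FirstArgmax.

Lemma fmax_argmax (R : realType) n (a0 : 'I_n) (f : 'I_n -> R) :
  fmax f = f (argmax a0 f).
Proof.
apply/eqP; rewrite eq_le le_bigmax andbT; apply: bigmax_le => [|c _].
  case E: (enum 'I_n) => [|c s] /=; last exact: argmax_max.
  by have := mem_enum 'I_n a0; rewrite E.
exact: argmax_max.
Qed.

Section Interpolation.
Variable R : numFieldType.
Implicit Types p q v : R.

(* For [q = p] this is the junk value [0 / 0 = 0], harmless since then [v = p]. *)
Definition interp_weight p q v : R := (v - p) / (q - p).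

Lemma interp_weight_itv p q v : p <= v <= q -> 0 <= interp_weight p q v <= 1.
Proof.
move=> /andP[pv vq]; rewrite /interp_weight.
have [<-|qp] := eqVneq q p; first by rewrite subrr invr0 mulr0 lexx ler01.
have qp_gt0 : 0 < q - p by rewrite subr_gt0 lt_neqAle eq_sym qp (le_trans pv vq).
by rewrite divr_ge0 ?subr_ge0 ?(le_trans pv vq) //= ler_pdivrMr // mul1r lerD2r.
Qed.

Lemma interp_weightK p q v : p <= v <= q ->
  interp_weight p q v * q + (1 - interp_weight p q v) * p = v.
Proof.
move=> /andP[pv vq]; rewrite /interp_weight.
have [qp|qp] := eqVneq q p.
  have vp : v = p by apply/le_anti; rewrite pv -qp vq.
  by rewrite qp vp subrr mul0r mul0r add0r subr0 mul1r.
have qp0 : q - p != 0 by rewrite subr_eq0.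
by field.
Qed.

End Interpolation.

Section TwoPoint.
Variables (R : numDomainType) (n : nat).

Definition two_point (l : R) (a b c : 'I_n) : R :=
  l * (c == a)%:R + (1 - l) * (c == b)%:R.

Lemma two_point_ge0 l a b c : 0 <= l <= 1 -> 0 <= two_point l a b c.
Proof. by case/andP=> l0 l1; rewrite addr_ge0 ?mulr_ge0 ?subr_ge0. Qed.

Lemma sum_two_pointM l a b (F : 'I_n -> R) :
  \sum_c two_point l a b c * F c = l * F a + (1 - l) * F b.
Proof.
have pick c0 : \sum_c (c == c0)%:R * F c = F c0.
  by rewrite (bigD1 c0) //= eqxx mul1r big1 ?addr0 // => c /negbTE ->; rewrite mul0r.
under eq_bigr do rewrite mulrDl -!mulrA.
by rewrite big_split -!mulr_sumr /= !pick.
Qed.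

Lemma sum_two_point l a b : \sum_c two_point l a b c = 1.
Proof.
under eq_bigr do rewrite -[two_point _ _ _ _]mulr1.
by rewrite sum_two_pointM !mulr1 addrC subrK.
Qed.

End TwoPoint.

(* The library does not join the pointed and topological structures of a product. *)
HB.instance Definition _ (T U : ptopologicalType) := Pointed.on (T * U)%type.

Definition borel (T : ptopologicalType) : Type :=
  g_sigma_algebraType [set A : set T | open A].

Section BorelFun.
Variables (R : realType) (T : ptopologicalType).

Lemma measurable_open (A : set T) : open A -> measurable (A : set (borel T)).
Proof. by move=> oA; exact: sub_gen_smallest. Qed.

Lemma continuous_measurable_borel (f : T -> R) :
  continuous f -> measurable_fun [set: borel T] f.
Proof.
move=> /continuousP cf; apply: (measurability _ (RGenOpens.measurableE R)).
move=> _ [_ [a [b ->] <-]]; rewrite setTI; apply: measurable_open.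
exact/cf/interval_open.
Qed.

Lemma measurable_borel_meas (f : T -> R) :
  measurable_fun [set: borel T] f -> borel_meas f.
Proof.
move=> mf U oU; rewrite -[_ @^-1` _]setTI.
exact: mf (open_measurable oU).
Qed.
End BorelFun.

Lemma continuous_fst (T U : topologicalType) : continuous (@fst T U).
Proof. by case=> x y; exact: cvg_fst. Qed.

Lemma continuous_snd (T U : topologicalType) : continuous (@snd T U).
Proof. by case=> x y; exact: cvg_snd. Qed.

Lemma measurable_inv (R : realType) : measurable_fun [set: R] (@GRing.inv R).
Proof.
have -> : [set: R] = [set x | x != 0] `|` [set 0].
  by apply/seteqP; split=> x // _; case: (eqVneq x 0) => [->|]; [right|left].
apply/measurable_funU => //; first exact: open_measurable (@open_neq R 0).
split; last exact: measurable_fun_set1.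
apply: open_continuous_measurable_fun; first exact: open_neq.
by move=> x /set_mem; exact: inv_continuous.
Qed.

Section MeasurableSelection.
Variables (d : measure_display) (T : measurableType d) (R : realType).

Lemma measurable_fun_forall (I : finType) (P : I -> T -> bool) :
  (forall i, measurable_fun setT (P i)) ->
  measurable_fun setT (fun z => [forall i, P i z]).
Proof.
move=> mP; apply: (measurable_fun_bool true); rewrite setTI.
have -> : (fun z => [forall i, P i z]) @^-1` [set true]
    = \bigcap_(i in setT) (P i @^-1` [set true]).
  apply/seteqP; split=> z /= => [/forallP zP i _ | zP]; first exact: zP.
  by apply/forallP => i; exact: zP.
apply: fin_bigcap_measurable => [|i _]; first exact: finite_finset.
by rewrite -[X in measurable X]setTI; exact: mP.
Qed.

Lemma measurable_argmax_eq n (a0 : 'I_n) (h : 'I_n -> T -> R) a :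
  (forall c, measurable_fun setT (h c)) ->
  measurable_fun setT (fun z => argmax a0 (h ^~ z) == a).
Proof.
move=> mh; under eq_fun do rewrite argmax_eq.
apply: measurable_and; apply: measurable_fun_forall => j.
  exact: measurable_fun_ler.
by case: (j < a)%N; [exact: measurable_fun_ltr | exact: measurable_cst].
Qed.

Lemma measurable_fun_select (I : finType) (i : T -> I) (F : I -> T -> R) :
  (forall a, measurable_fun setT (fun z => i z == a)) ->
  (forall a, measurable_fun setT (F a)) ->
  measurable_fun setT (fun z => F (i z) z).
Proof.
move=> mi mF.
have -> : (fun z => F (i z) z) = fun z => \sum_a (if i z == a then F a z else 0).
  apply/funext => z; rewrite -big_mkcond /=.
  by under eq_bigl do rewrite eq_sym; rewrite big_pred1_eq.
by apply: measurable_sum => a; apply: measurable_fun_ifT.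
Qed.

Lemma measurable_funV (f : T -> R) :
  measurable_fun setT f -> measurable_fun setT (fun z => (f z)^-1).
Proof. by move=> mf; exact: (measurableT_comp (@measurable_inv R) mf). Qed.

End MeasurableSelection.

Section GreedyMixture.
Variables (R : realType) (nS nA m : nat) (a0 : 'I_nA) (Phi : 'M[R]_(nA * nS, m)).
Implicit Types (th tb : 'cV[R]_m) (s : 'I_nS) (a b c : 'I_nA).

Definition qvalue th s a : R := (Phi *m th) (sa_idx s a) 0.

Definition greedy th s : 'I_nA := argmax a0 (qvalue th s).

Definition mix_weight th tb s a b : R :=
  interp_weight (qvalue th s b - qvalue tb s b) (qvalue th s a - qvalue tb s a)
    (qvalue th s a - qvalue tb s b).

Definition mix_policy th tb : 'M[R]_(nS, nA) :=
  \matrix_(s, c)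
    two_point (mix_weight th tb s (greedy th s) (greedy tb s))
      (greedy th s) (greedy tb s) c.

Lemma qvalueB th tb s a : qvalue (th - tb) s a = qvalue th s a - qvalue tb s a.
Proof. by rewrite /qvalue mulmxBr !mxE. Qed.

Lemma Vtheta_greedy th : Vtheta Phi th = \col_s qvalue th s (greedy th s).
Proof. by apply/matrixP => s j; rewrite !mxE (fmax_argmax a0). Qed.

Lemma greedy_gap_between th tb s (a := greedy th s) (b := greedy tb s) :
  qvalue th s b - qvalue tb s b <= qvalue th s a - qvalue tb s b
    <= qvalue th s a - qvalue tb s a.
Proof. by rewrite lerD2r lerD2l lerN2 !argmax_max. Qed.

Lemma mix_policy_is_policy th tb : is_policy (mix_policy th tb).
Proof.
split=> [s c|s]; last by under eq_bigr do rewrite mxE; exact: sum_two_point.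
by rewrite mxE two_point_ge0 // interp_weight_itv // greedy_gap_between.
Qed.

Lemma mulmx_Pi_mat (mu : 'M[R]_(nS, nA)) (v : 'cV[R]_(nA * nS)) s :
  (Pi_mat mu *m v) s 0 = \sum_a mu s a * v (sa_idx s a) 0.
Proof.
rewrite mxE; under eq_bigr do rewrite mxE big_distrl /=.
rewrite exchange_big /=; apply: eq_bigr => a _.
rewrite (bigD1 (sa_idx s a)) //= eqxx mul1r big1 ?addr0 // => k /negbTE ->.
by rewrite !mul0r.
Qed.

Lemma Vtheta_sub th tb :
  Vtheta Phi th - Vtheta Phi tb = Pi_mat (mix_policy th tb) *m (Phi *m (th - tb)).
Proof.
apply/matrixP => s j; rewrite !Vtheta_greedy ord1 mulmx_Pi_mat !mxE.
under eq_bigr do rewrite mxE -/(qvalue _ _ _) qvalueB.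
by rewrite sum_two_pointM interp_weightK // greedy_gap_between.
Qed.

End GreedyMixture.

Lemma Talpha_sub (R : realType) (nS nA m : nat)
  (P : 'M[R]_(nA * nS, nS)) (Rw : 'cV[R]_(nA * nS)) (gamma : R)
  (Phi : 'M[R]_(nA * nS, m)) (d : 'cV[R]_(nA * nS)) (alpha : R)
  (mu : 'M[R]_(nS, nA)) (th tb : 'cV[R]_m) :
  Vtheta Phi th - Vtheta Phi tb = Pi_mat mu *m (Phi *m (th - tb)) ->
  Talpha P Rw gamma Phi d alpha th - Talpha P Rw gamma Phi d alpha tb
  = Amu P gamma Phi d alpha mu *m (th - tb).
Proof.
move=> dV; rewrite /Talpha /gfun /Amu -[Vtheta Phi th](subrK (Vtheta Phi tb)) dV.
do 3! rewrite ?(mulmxDr, mulmxBr, mulmxDl, mulmxBl, mulmxN, mulNmx, mul1mx, mulmxA)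
  -?(scalemxAl, scalemxAr) ?scalerA.
by apply/matrixP => i j; rewrite !mxE; ring.
Qed.

Section MeasurablePolicy.
Variables (R : realType) (nS nA m : nat) (a0 : 'I_nA) (Phi : 'M[R]_(nA * nS, m)).
Local Notation X := ('cV[R]_m * 'cV[R]_m)%type.

Lemma measurable_qvalue (f : X -> 'cV[R]_m) s a : continuous f ->
  measurable_fun [set: borel X] (fun z => qvalue Phi (f z) s a).
Proof.
move=> cf; rewrite (_ : (fun z => _) = fun z => \sum_j Phi (sa_idx s a) j * f z j 0).
  2: by apply/funext => z; rewrite /qvalue mxE.
apply: measurable_sum => j; apply: measurable_funM => //.
apply: continuous_measurable_borel => z.
exact: (continuous_comp (cf z) (@coord_continuous _ _ _ j 0 (f z))).
Qed.

Lemma measurable_mix_policy s c :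
  measurable_fun [set: borel X] (fun z => mix_policy a0 Phi z.1 z.2 s c).
Proof.
have mq1 a : measurable_fun [set: borel X] (fun z => qvalue Phi z.1 s a).
  by apply: measurable_qvalue; exact: continuous_fst.
have mq2 a : measurable_fun [set: borel X] (fun z => qvalue Phi z.2 s a).
  by apply: measurable_qvalue; exact: continuous_snd.
have mgreedy1 a : measurable_fun [set: borel X] (fun z => greedy a0 Phi z.1 s == a).
  exact: measurable_argmax_eq.
have mgreedy2 a : measurable_fun [set: borel X] (fun z => greedy a0 Phi z.2 s == a).
  exact: measurable_argmax_eq.
rewrite (_ : (fun z => _) = fun z => two_point
    (mix_weight Phi z.1 z.2 s (greedy a0 Phi z.1 s) (greedy a0 Phi z.2 s))
    (greedy a0 Phi z.1 s) (greedy a0 Phi z.2 s) c).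
  2: by apply/funext => z; rewrite mxE.
apply: (@measurable_fun_select _ (borel X) R _ (fun z => greedy a0 Phi z.1 s)
  (fun a z => two_point (mix_weight Phi z.1 z.2 s a (greedy a0 Phi z.2 s))
                a (greedy a0 Phi z.2 s) c)) => // a.
apply: (@measurable_fun_select _ (borel X) R _ (fun z => greedy a0 Phi z.2 s)
  (fun b z => two_point (mix_weight Phi z.1 z.2 s a b) a b c)) => // b.
have mw : measurable_fun [set: borel X] (fun z => mix_weight Phi z.1 z.2 s a b).
  by apply: measurable_funM; [|apply: measurable_funV];
    apply: measurable_funB; apply: measurable_funB.
by apply: measurable_funD; apply: measurable_funM => //; exact: measurable_funB.
Qed.

End MeasurablePolicy.

Theorem proposition1
  (R : realType) (nS nA m : nat)
  (P : 'M[R]_(nA * nS, nS)) (Rw : 'cV[R]_(nA * nS)) (gamma : R)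
  (Phi : 'M[R]_(nA * nS, m)) (d : 'cV[R]_(nA * nS)) (alpha : R) :
  (0 < nA)%N ->
  row_stochastic P ->
  0 < gamma < 1 ->
  \rank Phi = m ->
  (forall i, 0 < d i 0) ->
  0 < alpha < 1 ->
  (* part 1 *)
  (forall theta thetabar : 'cV[R]_m,
     exists mu : 'M[R]_(nS, nA),
       is_policy mu /\
       Talpha P Rw gamma Phi d alpha theta - Talpha P Rw gamma Phi d alpha thetabar
       = Amu P gamma Phi d alpha mu *m (theta - thetabar))
  /\
  (* part 2: the iteration, with policies chosen measurably in (theta_k, theta_star) *)
  (exists pol : 'cV[R]_m * 'cV[R]_m -> 'M[R]_(nS, nA),
     (forall z, is_policy (pol z)) /\
     (forall (s : 'I_nS) (a : 'I_nA), borel_meas (fun z => pol z s a)) /\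
     forall (thetastar : 'cV[R]_m),
       gfun P Rw gamma Phi d thetastar = 0 ->
       forall theta : nat -> 'cV[R]_m,
         (forall k, theta k.+1 = Talpha P Rw gamma Phi d alpha (theta k)) ->
         forall k,
           theta k.+1 - thetastar
           = Amu P gamma Phi d alpha (pol (theta k, thetastar)) *m (theta k - thetastar)).
Proof.
move=> nA_gt0 _ _ _ _ _; pose a0 : 'I_nA := Ordinal nA_gt0.
have Tsub th tb := Talpha_sub P Rw gamma d alpha (Vtheta_sub a0 Phi th tb).
split=> [th tb|].
  exists (mix_policy a0 Phi th tb).
  by split; [exact: mix_policy_is_policy | exact: Tsub].
exists (fun z => mix_policy a0 Phi z.1 z.2).
split; first by move=> z; exact: mix_policy_is_policy.
split; first by move=> s c; apply: measurable_borel_meas; exact: measurable_mix_policy.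
move=> ts g_ts th th_rec k.
have ts_fixed : Talpha P Rw gamma Phi d alpha ts = ts.
  by rewrite /Talpha g_ts scaler0 addr0.
by rewrite th_rec -{1}ts_fixed Tsub.
Qed.
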